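(* Let $n,m,D$ be integers such that $n^2 \ge m \ge n \ge 4$ and $n/\sqrt{m} > D \ge 3$. There exists a family $\mathcal{G}$ of $n$-vertex directed graphs with diameter $D$ and $\Theta(m)$ edges such that any data structure for graphs in $\mathcal{G}$ that decides, for a queried edge $e$, whether the fault-tolerant diameter $\mathrm{diam}(G-e)$ remains at $D$ or increases to $(3D-1)/2$ for odd $D$ (respectively to $(3D/2)-1$ for even $D$) requires $\Omega(m)$ bits of space.
   Context: Graphs are unweighted. $G-e$ is $G$ with edge $e$ removed and $\mathrm{diam}(H)=\max_{s,t} d_H(s,t)$, the maximum shortest-path distance over ordered vertex pairs ($+\infty$ if $H$ is not strongly connected). *)

From mathcomp Require Import all_boot.
Set Implicit Arguments. Unset Strict Implicit. Unset Printing Implicit Defensive.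

Definition digraph (n : nat) := {set ('I_n * 'I_n)}.

Definition loopless n (E : digraph n) : Prop := forall v, (v, v) \notin E.

Definition arc n (E : digraph n) : rel 'I_n := fun x y => (x, y) \in E.

Definition dist_le n (E : digraph n) (s t : 'I_n) (k : nat) : Prop :=
  exists p : seq 'I_n, [/\ path (arc E) s p, last s p = t & size p <= k].

Definition is_diam n (E : digraph n) (d : nat) : Prop :=
  (forall s t, dist_le E s t d) /\
  (d = 0 \/ exists s t, ~ dist_le E s t d.-1).

Definition inc_diam (D : nat) : nat :=
  if odd D then (3 * D - 1)./2 else (3 * D)./2 - 1.

From Pilot Require Import Defs.
From mathcomp Require Import all_boot zify.
Set Implicit Arguments. Unset Strict Implicit. Unset Printing Implicit Defensive.

(* Write D = la + lb + 1 with la = (D - 1) / 2.  The hard graphs consist of P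
   paths A_i = Av i 0 -> ... -> Av i la, Q paths B_j = Bv j 0 -> ... -> Bv j lb,
   a hub path Cv 1 -> ... -> Cv lb.+1 whose vertices all return to Cv 1, and
   padding vertices attached to Cv 1.  Every end Av i la has an arc to every
   start Bv j 0, and a bit table adds the shortcut Av i la.-1 -> Bv j 0 exactly
   when bit i j holds.  Every vertex reaches Cv 1 and is reached from it quickly
   enough that the diameter is D, attained from Av 0 0 to Cv lb.+1.  Deleting
   the arc Av i la -> Bv j 0 keeps the diameter D if the shortcut is present;
   otherwise Av i 0 can only reach Bv j lb through the hub, at distance D + la,
   the increased diameter.  Hence a fault-tolerant diameter oracle determines
   the P * Q bits of the table, and P, Q are chosen with P * Q = Theta(m) so
   that the graphs fit in n vertices and have Theta(m) arcs. *)

Section Walks.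
Variables (T : Type) (e : rel T).

(* For [e := Defs.arc E] this unfolds to [dist_le E]. *)
Definition walk_le (s t : T) (k : nat) : Prop :=
  exists p : seq T, [/\ path e s p, last s p = t & size p <= k].

Lemma walk_le0 s : walk_le s s 0.
Proof. by exists [::]. Qed.

Lemma walk_le1 s t : e s t -> walk_le s t 1.
Proof. by move=> st; exists [:: t]; rewrite /= st. Qed.

Lemma walk_le_cat s u t a b : walk_le s u a -> walk_le u t b -> walk_le s t (a + b).
Proof.
move=> [p [sp <- lep]] [q [uq <- leq]]; exists (p ++ q).
by rewrite cat_path last_cat sp uq size_cat leq_add.
Qed.

Lemma walk_le_leq s t a b : a <= b -> walk_le s t a -> walk_le s t b.
Proof. by move=> ab [p [sp pt lep]]; exists p; split=> //; apply: leq_trans ab. Qed.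

Lemma walk_le_trans s u t a b c :
  walk_le s u a -> walk_le u t b -> a + b <= c -> walk_le s t c.
Proof. by move=> su ut abc; apply: walk_le_leq abc (walk_le_cat su ut). Qed.

Lemma walk_le_chain (g : nat -> T) a k :
  (forall x, x < k -> e (g (a + x)) (g (a + x).+1)) -> walk_le (g a) (g (a + k)) k.
Proof.
elim: k => [|k IH] chain; first by rewrite addn0; apply: walk_le0.
rewrite -addn1; apply: walk_le_cat (IH _) _ => [x xk|]; first by apply: chain; lia.
by rewrite addnA addn1; apply/walk_le1/chain.
Qed.

Lemma walk_le_potential (pot : T -> nat) s t k :
  (forall x y, e x y -> pot y <= (pot x).+1) -> walk_le s t k -> pot t <= pot s + k.
Proof.
move=> pot_arc [p [sp <-]]; elim: p s sp k => [|x p IH] s /=; first by move=> *; apply: leq_addr.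
move=> /andP[sx xp] [|k] //= lep.
by apply: leq_trans (IH _ xp k lep) _; rewrite addnS -addSn leq_add2r pot_arc.
Qed.

End Walks.

Lemma walk_le_homo (T U : Type) (e : rel T) (e' : rel U) (f : T -> U) s t k :
  {homo f : x y / e x y >-> e' x y} -> walk_le e s t k -> walk_le e' (f s) (f t) k.
Proof.
move=> hf [p [sp <- lep]]; exists (map f p).
by rewrite (homo_path hf sp) last_map size_map.
Qed.

Inductive vtx := Av of nat & nat | Bv of nat & nat | Cv of nat | Pad of nat.

Section Gadget.
Variables (n D P Q : nat) (bit : nat -> nat -> bool).
Hypothesis D_ge3 : 3 <= D.

Definition la := D.-1./2.
Definition lb := D.-1 - la.

Lemma la_lb : [/\ 0 < la, la <= lb, lb <= la.+1 & la + lb = D.-1].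
Proof. rewrite /lb /la -divn2; split; lia. Qed.

Lemma inc_diamE : inc_diam D = D + la.
Proof. by rewrite /inc_diam /la -!divn2; case: ifP => odd_D; have := modn2 D; rewrite odd_D; lia. Qed.

Definition varc (cut : option (nat * nat)) (k k' : vtx) : bool :=
  match k, k' with
  | Av i d, Av i' d' => (i' == i) && (d' == d.+1)
  | Av i d, Cv x => (d == la) && (x == 1)
  | Av i d, Bv j y => (y == 0) && ((d == la) && (cut != Some (i, j)) || (d == la.-1) && bit i j)
  | Bv j y, Bv j' y' => (j' == j) && (y' == y.+1)
  | Bv _ _, Cv x => x == 1
  | Cv x, Cv x' => (x' == x.+1) || (x' == 1) && (1 < x)
  | Cv x, Bv j y => (x == la) && (y == 0)
  | Cv x, Av i d => x == maxn 1 d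
  | Cv x, Pad _ => x == 1
  | Pad _, Cv x => x == 1
  | _, _ => false
  end.

Definition nA := P * la.+1.
Definition nB := Q * lb.+1.
Definition nused := nA + nB + lb.+1.

Definition valid (k : vtx) : bool :=
  match k with
  | Av i d => (i < P) && (d <= la)
  | Bv j y => (j < Q) && (y <= lb)
  | Cv x => 0 < x <= lb.+1
  | Pad u => nused <= u < n.+1
  end.

Definition gadget_rel cut k k' := [&& valid k, varc cut k k' & valid k'].

Local Notation vwalk cut := (walk_le (gadget_rel cut)).

Lemma walk_Av cut i d t : i < P -> d + t <= la -> vwalk cut (Av i d) (Av i (d + t)) t.
Proof. by move=> iP dt; apply: walk_le_chain => x xt; rewrite /gadget_rel /= iP !eqxx; lia. Qed.

Lemma walk_Bv cut j y t : j < Q -> y + t <= lb -> vwalk cut (Bv j y) (Bv j (y + t)) t.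
Proof. by move=> jQ yt; apply: walk_le_chain => x xt; rewrite /gadget_rel /= jQ !eqxx; lia. Qed.

Lemma walk_Cv cut x t : 0 < x -> x + t <= lb.+1 -> vwalk cut (Cv x) (Cv (x + t)) t.
Proof. by move=> x_gt0 xt; apply: walk_le_chain => z zt; rewrite /gadget_rel /= eqxx; lia. Qed.

Definition to_hub (k : vtx) : nat :=
  match k with Av _ d => la - d + 1 | Cv 1 => 0 | _ => 1 end.

Definition from_hub (k : vtx) : nat :=
  match k with Av _ d => maxn 1 d | Bv _ y => la + y | Cv x => x.-1 | Pad _ => 1 end.

Lemma walk_to_hub cut k : valid k -> vwalk cut k (Cv 1) (to_hub k).
Proof.
have [la_gt0 la_le_lb _ _] := la_lb.
case: k => [i d|j y|[|[|x]]|u] //= vk; last 3 first.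
- exact: walk_le0.
all: try by apply: walk_le1; move: vk; rewrite /gadget_rel /=; lia.
case/andP: vk => iP d_le; have := walk_Av cut iP (_ : d + (la - d) <= la).
rewrite subnKC // => /(_ (leqnn _)) walkA; apply: walk_le_cat walkA (walk_le1 _).
by rewrite /gadget_rel /= iP !eqxx; lia.
Qed.

Lemma walk_from_hub cut k : valid k -> vwalk cut (Cv 1) k (from_hub k).
Proof.
have [la_gt0 la_le_lb _ _] := la_lb.
have walkC x : 0 < x <= lb.+1 -> vwalk cut (Cv 1) (Cv x) x.-1.
  by case/andP=> x_gt0 x_le; have := walk_Cv cut (isT : 0 < 1) (_ : 1 + x.-1 <= lb.+1);
    rewrite add1n prednK //; apply; lia.
case: k => [i d|j y|x|u] /= vk; last 2 first.
- exact: walkC.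
- by apply: walk_le1; move: vk; rewrite /gadget_rel /=; lia.
- case/andP: vk => iP d_le; case: (leqP d 1) => d_small.
    by apply: walk_le1; rewrite /gadget_rel /= iP; lia.
  apply: walk_le_trans (walkC d _) (walk_le1 _) _; try lia.
  by rewrite /gadget_rel /= iP; lia.
- case/andP: vk => jQ y_le.
  apply: walk_le_trans (walkC la _) (walk_le_cat (walk_le1 _) (walk_Bv cut jQ (_ : 0 + y <= lb))) _ => //.
  + lia.
  + by rewrite /gadget_rel /= jQ !eqxx; lia.
  + lia.
Qed.

Lemma walk_via_hub cut k k' c :
  valid k -> valid k' -> to_hub k + from_hub k' <= c -> vwalk cut k k' c.
Proof. by move=> vk vk'; apply: walk_le_trans (walk_to_hub cut vk) (walk_from_hub cut vk'). Qed.

Lemma walk_Av_Bv cut i j d y : valid (Av i d) -> valid (Bv j y) -> cut != Some (i, j) ->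
  vwalk cut (Av i d) (Bv j y) (la - d + 1 + y).
Proof.
move=> /andP[iP d_le] /andP[jQ y_le] uncut.
have := walk_Av cut iP (_ : d + (la - d) <= la); rewrite subnKC // => /(_ (leqnn _)) walkA.
have walkB := walk_Bv cut jQ (_ : 0 + y <= lb).
apply: walk_le_cat (walk_le_cat walkA (walk_le1 _)) (walkB _) => //.
by rewrite /gadget_rel /= iP jQ uncut !eqxx leqnn.
Qed.

Lemma walk_Av_Bv_shortcut cut i j d y : valid (Av i d) -> valid (Bv j y) -> d <= la.-1 ->
  bit i j -> vwalk cut (Av i d) (Bv j y) (la.-1 - d + 1 + y).
Proof.
have [la_gt0 _ _ _] := la_lb.
move=> /andP[iP _] /andP[jQ y_le] d_le bit_ij.
have := walk_Av cut iP (_ : d + (la.-1 - d) <= la); rewrite subnKC // => /(_ _) walkA.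
apply: walk_le_cat (walk_le_cat (walkA _) (walk_le1 _)) (walk_Bv cut jQ (_ : 0 + y <= lb)) => //.
- lia.
- by rewrite /gadget_rel /= iP jQ bit_ij !eqxx orbT; lia.
Qed.

Definition detour cut (k k' : vtx) : bool :=
  if (k, k') is (Av i d, Bv j _) then [&& d < la, cut == Some (i, j) & ~~ bit i j] else false.

Lemma walk_upper cut k k' : valid k -> valid k' ->
  vwalk cut k k' (if detour cut k k' then D + la else D).
Proof.
have [la_gt0 la_le_lb lb_le sum] := la_lb.
move=> vk vk'; case: ifP => [_|no_detour].
  apply: walk_via_hub => //.
  by case: k vk => [i d|j y|[|[|x]]|u]; case: k' vk' => [i' d'|j' y'|x'|u'] /=; lia.
case: k vk no_detour => [i d|j y|[|[|x]]|u] vk /=; last 4 first.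
  all: try by move=> _; apply: walk_via_hub => //; case: k' vk' => [i' d'|j' y'|x'|u'] /=; lia.
case: k' vk' => [i' d'|j y|x|u] vk' no_detour; last 3 first.
  all: try by apply: walk_via_hub => //=; move: vk vk' => /=; lia.
case: (leqP la d) => d_ge; first by apply: walk_via_hub => //=; move: vk vk' => /=; lia.
case: (eqVneq cut (Some (i, j))) => [cut_ij|uncut] in no_detour *.
  move: no_detour; rewrite /detour /= d_ge cut_ij eqxx /= => /negbFE bit_ij.
  by apply: walk_le_leq _ (walk_Av_Bv_shortcut _ vk vk' _ bit_ij) => /=; move: vk vk' => /=; lia.
by apply: walk_le_leq _ (walk_Av_Bv vk vk' uncut) => /=; move: vk vk' => /=; lia.
Qed.

Definition height (k : vtx) : nat :=
  match k with Av _ d => d | Bv _ y => la + y | Cv x => la + x | Pad _ => la.+2 end.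

Lemma height_arc cut k k' : gadget_rel cut k k' -> height k' <= (height k).+1.
Proof.
have [la_gt0 _ _ _] := la_lb.
by case: k => [i d|j y|x|u]; case: k' => [i' d'|j' y'|x'|u'] /=; rewrite /gadget_rel /=; lia.
Qed.

(* Without the arc Av i la -> Bv j 0 and its shortcut, the paths B_j and A_i'
   (i' != i) are reached from A_i only through the hub, which costs la.+1 more
   than [height] accounts for. *)
Definition detour_height i j (k : vtx) : nat :=
  match k with
  | Av i' d => if i' == i then d else la.+1 + d
  | Bv j' y => if j' == j then la + la.+1 + y else la + y
  | Cv x => la + x
  | Pad _ => la.+2
  end.

Lemma detour_height_arc i j : bit i j = false ->
  forall k k', gadget_rel (Some (i, j)) k k' -> detour_height i j k' <= (detour_height i j k).+1.
Proof.
have [la_gt0 _ _ _] := la_lb.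
move=> bit_ij k k'; rewrite /gadget_rel.
case: k => [i1 d1|j1 y1|x1|u1]; case: k' => [i2 d2|j2 y2|x2|u2] //=; try lia.
all: repeat match goal with |- context [if ?a == ?b then _ else _] => case: (eqVneq a b) => [->|?] end.
all: rewrite ?eqxx ?bit_ij /= ?andbF ?orbF; lia.
Qed.

Definition code (k : vtx) : nat :=
  match k with
  | Av i d => i * la.+1 + d
  | Bv j y => nA + (j * lb.+1 + y)
  | Cv x => nA + nB + x.-1
  | Pad u => u
  end.

Definition decode (u : nat) : vtx :=
  if u < nA then Av (u %/ la.+1) (u %% la.+1)
  else if u < nA + nB then Bv ((u - nA) %/ lb.+1) ((u - nA) %% lb.+1)
  else if u < nused then Cv (u - (nA + nB)).+1
  else Pad u.

Lemma mixed_radix_lt i d c N : i < N -> d <= c -> i * c.+1 + d < N * c.+1.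
Proof. by move=> iN dc; apply: leq_trans (_ : i.+1 * c.+1 <= _); rewrite ?leq_mul2r ?iN ?orbT //; lia. Qed.

Lemma mixed_radixK i d c : d <= c -> (i * c.+1 + d) %/ c.+1 = i /\ (i * c.+1 + d) %% c.+1 = d.
Proof. by move=> dc; rewrite divnMDl // modnMDl divn_small ?addn0 ?modn_small. Qed.

Lemma decodeK : cancel decode code.
Proof.
move=> u; rewrite /decode /code; case: ifP => uA; first by rewrite -divn_eq.
case: ifP => uB; first by rewrite -divn_eq; lia.
by case: ifP => //; lia.
Qed.

Lemma decode_valid u : u < n.+1 -> valid (decode u).
Proof.
have [la_gt0 _ _ _] := la_lb.
move=> un; rewrite /decode; case: ifP => uA /=.
  by rewrite ltn_divLR // uA -ltnS ltn_mod.
case: ifP => uB /=; first by rewrite ltn_divLR // -[_ <= lb]ltnS ltn_mod andbT; rewrite /nB in uB; lia.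
by case: ifP => /= uC; rewrite /nused in uC *; lia.
Qed.

Lemma codeK k : valid k -> decode (code k) = k.
Proof.
rewrite /decode; case: k => [i d|j y|x|u] /= /andP[h1 h2].
- have [-> ->] := mixed_radixK i h2; by rewrite mixed_radix_lt.
- have := mixed_radix_lt h1 h2; rewrite -/nB => lt.
  rewrite addKn; have [-> ->] := mixed_radixK j h2.
  have -> : nA + (j * lb.+1 + y) < nA = false by lia.
  by rewrite ltn_add2l lt.
- rewrite /nused; do 3 (case: ifP => ?; try lia); congr Cv; lia.
- by move: h1; rewrite /nused; do 3 (case: ifP => ?; try lia).
Qed.

Lemma nused_le : 0 < Q <= P -> nused <= P * (3 * D).
Proof.
have [la_gt0 _ _ sum] := la_lb.
case/andP=> Q_gt0 Q_le_P; rewrite /nused /nA /nB.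
have : Q * lb.+1 <= P * D by apply: leq_mul; lia.
have : P * la.+1 <= P * D by rewrite leq_mul2l; lia.
nia.
Qed.

Hypothesis fits : nused <= n.+1.

Lemma code_lt k : valid k -> code k < n.+1.
Proof.
move: fits; rewrite /nused; case: k => [i d|j y|x|u] /= fits' /andP[h1 h2] //.
- by have := mixed_radix_lt h1 h2; rewrite -/nA; lia.
- by have := mixed_radix_lt h1 h2; rewrite -/nB; lia.
- lia.
Qed.

Definition vert (k : vtx) : 'I_n.+1 := inord (code k).

Lemma vertK k : valid k -> decode (vert k) = k.
Proof. by move=> vk; rewrite /vert inordK ?codeK ?code_lt. Qed.

Lemma vert_inj k k' : valid k -> valid k' -> vert k = vert k' -> k = k'.
Proof. by move=> vk vk' /(congr1 (fun w : 'I_n.+1 => decode w)); rewrite !vertK. Qed.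

Lemma vert_decode (u : 'I_n.+1) : vert (decode u) = u.
Proof. by apply: val_inj; rewrite /vert decodeK inord_val. Qed.

Definition gadget cut : digraph n.+1 :=
  [set e : 'I_n.+1 * 'I_n.+1 | varc cut (decode e.1) (decode e.2)].

(* [arc] alone would be path.v's arc of a cycle. *)
Lemma arc_gadget cut (u v : 'I_n.+1) : Defs.arc (gadget cut) u v = gadget_rel cut (decode u) (decode v).
Proof. by rewrite /Defs.arc inE /gadget_rel !decode_valid ?andbT ?ltn_ord. Qed.

Lemma dist_le_gadget cut (u v : 'I_n.+1) L :
  vwalk cut (decode u) (decode v) L -> dist_le (gadget cut) u v L.
Proof.
rewrite -{2}(vert_decode u) -{2}(vert_decode v); apply: walk_le_homo => k k' kk'.
by case/and3P: (kk') => vk _ vk'; rewrite arc_gadget !vertK.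
Qed.

Lemma gadget_potential cut (pot : vtx -> nat) (u v : 'I_n.+1) L :
  (forall k k', gadget_rel cut k k' -> pot k' <= (pot k).+1) ->
  dist_le (gadget cut) u v L -> pot (decode v) <= pot (decode u) + L.
Proof.
move=> pot_arc uv; apply: (walk_le_potential pot_arc).
apply: (walk_le_homo (f := fun w : 'I_n.+1 => decode w)) uv => x y.
by rewrite arc_gadget.
Qed.

Lemma gadget_loopless cut : loopless (gadget cut).
Proof. by move=> v; rewrite inE /=; case: (decode v) => [i d|j y|x|u] //=; lia. Qed.

Lemma gadget_upper cut (u v : 'I_n.+1) :
  dist_le (gadget cut) u v (if detour cut (decode u) (decode v) then D + la else D).
Proof. by apply/dist_le_gadget/walk_upper; apply: decode_valid. Qed.

Lemma gadget_detour_diam i j : i < P -> j < Q -> bit i j = false ->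
  is_diam (gadget (Some (i, j))) (D + la).
Proof.
have [_ _ _ sum] := la_lb.
move=> iP jQ bit_ij; split=> [u v|].
  by have := gadget_upper (Some (i, j)) u v; case: ifP => // _; apply: walk_le_leq; lia.
right; exists (vert (Av i 0)), (vert (Bv j lb)).
move=> /(gadget_potential (detour_height_arc bit_ij)).
by rewrite !vertK /= ?iP ?jQ ?leqnn // !eqxx; lia.
Qed.

Definition cut_arc i j : 'I_n.+1 * 'I_n.+1 := (vert (Av i la), vert (Bv j 0)).

Lemma cut_arc_in i j : i < P -> j < Q -> cut_arc i j \in gadget None.
Proof. by move=> iP jQ; rewrite inE /= !vertK /= ?iP ?jQ ?leqnn ?eqxx. Qed.

Lemma gadget_cut i j : i < P -> j < Q -> gadget (Some (i, j)) = gadget None :\ cut_arc i j.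
Proof.
have [la_gt0 _ _ _] := la_lb.
have la_pred : (la == la.-1) = false by lia.
move=> iP jQ; apply/setP => -[u v]; rewrite !inE /cut_arc.
have [[-> ->] | ne] := eqVneq (u, v) (vert (Av i la), vert (Bv j 0)).
  by rewrite /= !vertK /= ?iP ?jQ ?leqnn ?eqxx ?la_pred.
rewrite /=; case eu: (decode u) => [i' d|||] //; case ev: (decode v) => [|j' y||] //=.
case: (eqVneq (Some (i, j)) (Some (i', j'))) => [[ei ej]|] //=; subst i' j'.
case: (eqVneq d la) => [d_la|] //=; case: (eqVneq y 0) => [y0|] //=.
by case/eqP: ne; rewrite -d_la -y0 -eu -ev !vert_decode.
Qed.

Lemma gadget_card_ge : P * Q <= #|gadget None|.
Proof.
pose f (ij : 'I_P * 'I_Q) := cut_arc ij.1 ij.2.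
have f_inj : injective f.
  move=> [i j] [i' j'] [/vert_inj + /vert_inj]; rewrite /= !ltn_ord leqnn => /(_ isT isT)-[ei].
  by move=> /(_ isT isT)-[ej]; congr pair; apply: val_inj.
have <- : #|f @: [set: 'I_P * 'I_Q]| = P * Q by rewrite card_imset // cardsT card_prod !card_ord.
by apply/subset_leq_card/subsetP => _ /imsetP[[i j] _ ->]; apply: cut_arc_in.
Qed.

Definition succ (k : vtx) : vtx :=
  match k with Av i d => Av i d.+1 | Bv j y => Bv j y.+1 | Cv x => Cv x.+1 | Pad _ => Cv 1 end.

Definition hub_pred (k : vtx) : nat :=
  match k with Av _ d => maxn 1 d | Bv _ _ => la | _ => 1 end.

Lemma varc_cases cut k k' : varc cut k k' ->
  [\/ exists i j (top : bool), k = Av i (if top then la else la.-1) /\ k' = Bv j 0,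
      k' = Cv 1, k' = succ k | k = Cv (hub_pred k')].
Proof.
case: k => [i d|j y|x|u]; case: k' => [i' d'|j' y'|x'|u'] //=.
- by case/andP=> /eqP-> /eqP->; constructor 3.
- case/andP=> /eqP-> /orP[] /andP[/eqP-> _]; constructor 1;
    by [exists i, j', true | exists i, j', false].
- by case/andP=> _ /eqP->; constructor 2.
- by case/andP=> /eqP-> /eqP->; constructor 3.
- by move/eqP->; constructor 2.
- by move/eqP->; constructor 4.
- by case/andP=> /eqP-> /eqP->; constructor 4.
- by case/orP=> [/eqP->|/andP[/eqP-> _]]; [constructor 3 | constructor 2].
- by move/eqP->; constructor 4.
- by move/eqP->; constructor 2.
Qed.

Lemma gadget_card_le cut : #|gadget cut| <= 2 * (P * Q) + 3 * n.+1.
Proof.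
pose bip := [set (vert (Av x.1.1 (if x.2 then la else la.-1)), vert (Bv x.1.2 0))
            | x : 'I_P * 'I_Q * bool].
pose out (g : vtx -> vtx) := [set (u, vert (g (decode u))) | u : 'I_n.+1].
pose into := [set (vert (Cv (hub_pred (decode v))), v) | v : 'I_n.+1].
have sub : gadget cut \subset bip :|: out (fun=> Cv 1) :|: out succ :|: into.
  apply/subsetP => -[u v]; rewrite inE /= !inE -!orbA => /varc_cases[[i [j [top [eu ev]]]]|ev|ev|eu];
    apply/or4P; [constructor 1 | constructor 2 | constructor 3 | constructor 4]; apply/imsetP.
  - have := decode_valid (ltn_ord u); have := decode_valid (ltn_ord v).
    rewrite eu ev => /andP[jQ _] /andP[iP _].
    by exists (Ordinal iP, Ordinal jQ, top); rewrite //= -eu -ev !vert_decode.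
  - by exists u; rewrite // -ev vert_decode.
  - by exists u; rewrite // -ev vert_decode.
  - by exists v; rewrite // -eu vert_decode.
have cardU (A B : {set 'I_n.+1 * 'I_n.+1}) a b : #|A| <= a -> #|B| <= b -> #|A :|: B| <= a + b.
  by move=> cA cB; apply: leq_trans (leq_card_setU A B) (leq_add cA cB).
have card_imT (T : finType) (f : T -> 'I_n.+1 * 'I_n.+1) : #|[set f x | x : T]| <= #|T|.
  exact: leq_imset_card.
apply: leq_trans (subset_leq_card sub) _.
have -> : 2 * (P * Q) + 3 * n.+1 = #|{: 'I_P * 'I_Q * bool}| + n.+1 + n.+1 + n.+1.
  by rewrite !card_prod !card_ord card_bool; lia.
by apply: (cardU); [apply: (cardU); [apply: (cardU)|]|]; rewrite ?(leq_trans (card_imT _ _)) ?card_ord.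
Qed.

Hypothesis P_gt0 : 0 < P.

Lemma gadget_diam cut : (forall i j, cut = Some (i, j) -> bit i j) -> is_diam (gadget cut) D.
Proof.
have [_ _ _ sum] := la_lb.
move=> cut_bit; split=> [u v|].
  have := gadget_upper cut u v; rewrite /detour.
  case: (decode u) => // i d; case: (decode v) => // j y.
  by case: eqP => [/cut_bit ->|]; rewrite ?andbF.
right; exists (vert (Av 0 0)), (vert (Cv lb.+1)) => /(gadget_potential (@height_arc cut)).
by rewrite !vertK //= ?P_gt0 ?ltnSn; lia.
Qed.

Lemma gadget_cut_diam i j : i < P -> j < Q ->
  if bit i j then is_diam (gadget None :\ cut_arc i j) D
  else is_diam (gadget None :\ cut_arc i j) (inc_diam D).
Proof.
move=> iP jQ; rewrite -gadget_cut // inc_diamE.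
case: ifP => [bit_ij | /gadget_detour_diam]; last exact.
by apply: gadget_diam => _ _ [<- <-].
Qed.

End Gadget.

Fixpoint bin_index (s : seq bool) : nat := if s is b :: s' then b + (bin_index s').*2 else 1.

Lemma bin_index_gt0 s : 0 < bin_index s.
Proof. by elim: s => //= b s IH; lia. Qed.

Lemma bin_index_lt s : bin_index s < 2 ^ (size s).+1.
Proof. by elim: s => //= b s IH; rewrite expnS; lia. Qed.

Lemma bin_index_inj : injective bin_index.
Proof.
elim=> [|b s IH] [|b' s'] //=.
- by have := bin_index_gt0 s'; lia.
- by have := bin_index_gt0 s; lia.
move=> e; have [-> /IH -> //] : b = b' /\ bin_index s = bin_index s'.
by case: b b' e => [] [] /=; lia.
Qed.

Lemma ffun_code_long (A : finType) (f : {ffun A -> bool} -> seq bool) :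
  injective f -> exists x, #|A| <= size (f x).
Proof.
move=> f_inj; case: (boolP [exists x, #|A| <= size (f x)]) => [/existsP // | /existsPn short].
have small x : (bin_index (f x)).-1 < (2 ^ #|A|).-1.
  have := bin_index_lt (f x); have := bin_index_gt0 (f x).
  have : 2 ^ (size (f x)).+1 <= 2 ^ #|A| by rewrite leq_exp2l // ltnNge short.
  lia.
have g_inj : injective (fun x => Ordinal (small x)).
  move=> x y [] /eqP; rewrite -eqSS !prednK ?bin_index_gt0 // => /eqP /bin_index_inj.
  exact: f_inj.
have := leq_card _ g_inj; rewrite card_ffun card_bool card_ord.
by have := expn_gt0 2 #|A|; lia.
Qed.

Lemma gadget_parameters n m D : n <= m -> 3 <= D -> D ^ 2 * m < n ^ 2 ->
  exists P Q, [/\ 0 < Q <= P, P * Q <= m, m <= 36 * (P * Q) & P * (3 * D) <= n].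
Proof.
have square x y : 3 * x * y * (3 * x * y) = x * x * (9 * (y * y)) by nia.
move=> n_le_m D_ge3; rewrite -!mulnn => Dm_lt.
have DD_lt : D * D < n.
  have : D * D * n < n * n by apply: leq_ltn_trans Dm_lt; rewrite leq_mul2l n_le_m orbT.
  by rewrite ltn_mul2r => /andP[].
pose P := n %/ (3 * D); pose Q := minn P (m %/ P).
have PD_le : P * (3 * D) <= n := leq_divM n (3 * D).
have PD_gt : n < P.+1 * (3 * D) by apply: ltn_ceil; lia.
have P_gt0 : 0 < P.
  have : 3 * D <= D * D by rewrite leq_mul2r D_ge3 orbT.
  by rewrite divn_gt0; lia.
have Q_gt0 : 0 < Q.
  by rewrite /Q leq_min P_gt0 divn_gt0 //; have := leq_pmulr P (_ : 0 < 3 * D); lia.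
have PQ_le : P * Q <= m.
  by apply: leq_trans (leq_divM m P); rewrite mulnC leq_mul2r geq_minr orbT.
exists P, Q; split=> //; first by rewrite Q_gt0 geq_minl.
rewrite /Q; case: (leqP P (m %/ P)) => [_ | P_gt].
  have sq_lt : n * n < 3 * D * P.+1 * (3 * D * P.+1) by apply: ltn_mul; lia.
  have : D * D * m < D * D * (9 * (P.+1 * P.+1)).
    by rewrite -square; apply: ltn_trans Dm_lt sq_lt.
  have : P.+1 * P.+1 <= 4 * (P * P) by rewrite -[4]/(2 * 2) mulnACA leq_mul //; lia.
  by rewrite ltn_pmul2l ?muln_gt0 ?andbb; lia.
have m_lt : m < P + P * (m %/ P) by rewrite [P * _]mulnC -mulSn ltn_ceil.
have : P * 9 <= P * (3 * D) by rewrite leq_mul2l; lia.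
lia.
Qed.

Definition ffun_bit P Q (b : {ffun 'I_P * 'I_Q -> bool}) (i j : nat) : bool :=
  if (insub i, insub j) is (Some i', Some j') then b (i', j') else false.

Lemma ffun_bitE P Q (b : {ffun 'I_P * 'I_Q -> bool}) (i : 'I_P) (j : 'I_Q) :
  ffun_bit b i j = b (i, j).
Proof. by rewrite /ffun_bit !valK. Qed.

Theorem lemma9 :
  exists c1 c2 c3 : nat,
  forall n m D : nat,
    4 <= n -> n <= m -> m <= n ^ 2 -> 3 <= D ->
    D ^ 2 * m < n ^ 2 ->   (* i.e. n / sqrt m > D *)
    exists F : {set digraph n},
      (forall G, G \in F ->
         [/\ loopless G, is_diam G D, m <= c1 * #|G| & #|G| <= c2 * m]) /\
      (forall (enc : digraph n -> seq bool) (dec : seq bool -> 'I_n -> 'I_n -> bool),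
         (forall G e, G \in F -> e \in G ->
            (is_diam (G :\ e) D -> dec (enc G) e.1 e.2 = true) /\
            (is_diam (G :\ e) (inc_diam D) -> dec (enc G) e.1 e.2 = false)) ->
         exists2 G, G \in F & m <= c3 * size (enc G)).
Proof.
exists 36, 5, 36 => -[|n] // m D _ n_le_m _ D_ge3 Dm_lt.
have [P [Q [/andP[Q_gt0 Q_le_P] PQ_le_m m_le_PQ PD_le_n]]] := gadget_parameters n_le_m D_ge3 Dm_lt.
have P_gt0 : 0 < P := leq_trans Q_gt0 Q_le_P.
have fits : nused D P Q <= n.+1.
  by apply: leq_trans (nused_le D_ge3 _) PD_le_n; rewrite Q_gt0.
pose G (b : {ffun 'I_P * 'I_Q -> bool}) := gadget n D P Q (ffun_bit b) None.
exists (G @: setT); split.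
  move=> _ /imsetP[b _ ->]; split.
  - exact: gadget_loopless.
  - by apply: gadget_diam.
  - by have := gadget_card_ge (ffun_bit b) D_ge3 fits; rewrite /G; lia.
  - by have := gadget_card_le (ffun_bit b) D_ge3 fits None; rewrite /G; lia.
move=> enc dec correct.
have decoded b (i : 'I_P) (j : 'I_Q) :
    dec (enc (G b)) (cut_arc n D P Q i j).1 (cut_arc n D P Q i j).2 = b (i, j).
  have [keep grow] := correct _ _ (imset_f _ (in_setT b)) (cut_arc_in _ D_ge3 fits (ltn_ord i) (ltn_ord j)).
  have := gadget_cut_diam (ffun_bit b) D_ge3 fits P_gt0 (ltn_ord i) (ltn_ord j).
  by rewrite ffun_bitE; case: (b (i, j)) => [/keep | /grow].
have [b long] : exists b, #|{: 'I_P * 'I_Q}| <= size (enc (G b)).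
  apply: ffun_code_long => b b' same; apply/ffunP => -[i j].
  by rewrite -!decoded same.
exists (G b); first exact: imset_f.
by move: long; rewrite card_prod !card_ord; lia.
Qed.
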